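(* Let $\mathcal{H}_A\cong\mathbb{C}^d$ and $\mathcal{H}_B$ be finite-dimensional, let $\Phi_1,\Phi_2:\mathcal{L}(\mathcal{H}_A)\to\mathcal{L}(\mathcal{H}_B)$ be quantum channels, $\Delta_\Phi=\Phi_1-\Phi_2$, and let $r=\operatorname{rank}M(\Delta_\Phi)$. Then $$\|\Delta_\Phi\|_{\mathrm{ME}}\le \frac{r}{d}\,\|\Delta_\Phi\|_\diamond .$$
   Context: For a linear map $\mathcal{S}:\mathcal{L}(\mathcal{H}_A)\to\mathcal{L}(\mathcal{H}_B)$ with $\{\ket{i}\}$ an orthonormal basis of $\mathcal{H}_A$: the Choi operator is $J(\mathcal{S})=\sum_{i,j}\mathcal{S}(\ket{i}\!\bra{j})\otimes\ket{i}\!\bra{j}\in\mathcal{L}(\mathcal{H}_B\otimes\mathcal{H}_A)$; the M-operator is $M(\mathcal{S})=\mathrm{Tr}_B[\,|J(\mathcal{S})|\,]$ with $|X|=\sqrt{X^\dagger X}$; the ME-norm is $\|\mathcal{S}\|_{\mathrm{ME}}=\|J(\mathcal{S})/d\|_1$; the diamond norm is $\|\mathcal{S}\|_\diamond=\max_{\rho_{AA'}}\|(\mathcal{S}\otimes\mathrm{id}_{A'})(\rho_{AA'})\|_1$ over finite-dimensional ancillas $\mathcal{H}_{A'}$ and states $\rho_{AA'}$, with $\|X\|_1=\mathrm{Tr}\sqrt{X^\dagger X}$. *)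

From HB Require Import structures.
From mathcomp Require Import all_boot all_order all_algebra.
From mathcomp Require Import sesquilinear spectral.
From mathcomp Require Import complex mxtens.
From mathcomp Require Import classical_sets reals.
From Stdlib Require Import ClassicalEpsilon.
Set Implicit Arguments. Unset Strict Implicit. Unset Printing Implicit Defensive.
Import Order.TTheory GRing.Theory Num.Theory.
Local Open Scope ring_scope.
Local Open Scope sesquilinear_scope.
Local Open Scope classical_set_scope.

Section Quantum.
Variable R : realType.
Local Notation C := (R[i]).

(* positive semidefinite: <v, A v> >= 0 for all v (in the order of C this
   means the value is real and nonnegative) *)
Definition psdmx n (A : 'M[C]_n) : Prop :=
  forall v : 'cV[C]_n, 0 <= (v ^t* *m A *m v) 0 0.

Definition statemx n (A : 'M[C]_n) : Prop := psdmx A /\ \tr A = 1.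

(* |X| = sqrt(X^dagger X): the (unique) psd square root of X^dagger X *)
Definition mxabs m n (X : 'M[C]_(m, n)) : 'M[C]_n :=
  epsilon (inhabits 0)
    (fun P : 'M[C]_n => psdmx P /\ P *m P = X ^t* *m X).

Definition trnorm n (X : 'M[C]_n) : R := complex.Re (\tr (mxabs X)).

(* block (k,l) of X in L(H_A (x) H_A'), H_A = C^dA, H_A' = C^n *)
Definition blockA dA n (X : 'M[C]_(dA * n)) (k l : 'I_n) : 'M[C]_dA :=
  \matrix_(i, j) X (mxtens_index (i, k)) (mxtens_index (j, l)).

(* (S (x) id_{A'}) X *)
Definition ext_id dA dB (S : 'M[C]_dA -> 'M[C]_dB) n (X : 'M[C]_(dA * n))
  : 'M[C]_(dB * n) :=
  \sum_(k < n) \sum_(l < n) (S (blockA X k l) *t delta_mx k l).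

Definition choi dA dB (S : 'M[C]_dA -> 'M[C]_dB) : 'M[C]_(dB * dA) :=
  \sum_(i < dA) \sum_(j < dA) (S (delta_mx i j) *t delta_mx i j).

Definition ptraceB dB dA (Y : 'M[C]_(dB * dA)) : 'M[C]_dA :=
  \matrix_(i, j) \sum_(b < dB) Y (mxtens_index (b, i)) (mxtens_index (b, j)).

Definition Mop dA dB (S : 'M[C]_dA -> 'M[C]_dB) : 'M[C]_dA :=
  ptraceB (mxabs (choi S)).

Definition me_norm dA dB (S : 'M[C]_dA -> 'M[C]_dB) : R :=
  trnorm ((dA%:R)^-1 *: choi S).

Definition diamond_norm dA dB (S : 'M[C]_dA -> 'M[C]_dB) : R :=
  sup [set t : R | exists (n : nat) (rho : 'M[C]_(dA * n)),
                    statemx rho /\ t = trnorm (ext_id S rho)].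

Definition CPmap dA dB (S : 'M[C]_dA -> 'M[C]_dB) : Prop :=
  forall (n : nat) (X : 'M[C]_(dA * n)), psdmx X -> psdmx (ext_id S X).

Definition TPmap dA dB (S : 'M[C]_dA -> 'M[C]_dB) : Prop :=
  forall X : 'M[C]_dA, \tr (S X) = \tr X.

Definition channel dA dB (S : {linear 'M[C]_dA -> 'M[C]_dB}) : Prop :=
  CPmap S /\ TPmap S.

End Quantum.

(* Let J be the Choi operator of Delta, M = Tr_B |J| and Q the orthogonal
   projection onto the support of M, so that tr Q = r.  As M is the sum of the
   compressions <b| |J| |b> and M (1 - Q) = 0, the matrix |J|, hence also J,
   vanishes on every |b> (x) (1 - Q) v; thus J (1 (x) Q) = J and, J being
   hermitian, J = (1 (x) Q) J (1 (x) Q).  The right-hand side is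
   (Delta (x) id) applied to |Q>><<Q|, whose trace is tr Q = r, so
   rho = |Q>><<Q| / r is a state with ||(Delta (x) id) rho||_1 = ||J||_1 / r. *)

From HB Require Import structures.
From mathcomp Require Import all_boot all_order all_algebra.
From mathcomp Require Import sesquilinear spectral.
From mathcomp Require Import complex mxtens.
From mathcomp Require Import classical_sets reals.
From Stdlib Require Import ClassicalEpsilon.
Set Implicit Arguments. Unset Strict Implicit. Unset Printing Implicit Defensive.
Import Order.TTheory GRing.Theory Num.Theory.
Local Open Scope ring_scope.
Local Open Scope sesquilinear_scope.

Lemma mxrank_mx11 (F : fieldType) (M : 'M[F]_1) : \rank M = (M 0 0 != 0).
Proof.
have [M00|M00] := eqVneq (M 0 0) 0.
  suff -> : M = 0 by rewrite mxrank0.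
  by apply/matrixP => i j; rewrite !ord1 M00 mxE.
apply/eqP; rewrite eqn_leq rank_leq_row lt0n mxrank_eq0.
by apply: contra M00 => /eqP ->; rewrite mxE.
Qed.

Lemma mxrank_diag (F : fieldType) n (d : 'rV[F]_n) :
  \rank (diag_mx d) = (\sum_i (d 0%R i != 0%R))%N.
Proof.
elim: n d => [|n IHn] d; first by rewrite big_ord0 flatmx0 mxrank0.
pose l := lsubmx (d : 'rV_(1 + n)); pose r := rsubmx (d : 'rV_(1 + n)).
have -> : \rank (diag_mx d) = \rank (block_mx (diag_mx l) 0 0 (diag_mx r)).
  by rewrite -diag_mx_row hsubmxK.
rewrite rank_diag_block_mx IHn mxrank_mx11 big_ord_recl !mxE eqxx mulr1n.
congr (_ + _); first by congr (d 0 _ != 0); apply: val_inj.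
by apply: eq_bigr => i _; rewrite mxE; congr (d 0 _ != 0); apply: val_inj.
Qed.

Section PsdMatrices.
Variable R : realType.
Local Notation C := R[i].

Lemma adjmxM m n p (A : 'M[C]_(m, n)) (B : 'M[C]_(n, p)) :
  (A *m B)^t* = B^t* *m A^t*.
Proof. by rewrite trmx_mul map_mxM. Qed.

Lemma adjmxD m n (A B : 'M[C]_(m, n)) : (A + B)^t* = A^t* + B^t*.
Proof. by rewrite linearD map_mxD. Qed.

Lemma adjmxB m n (A B : 'M[C]_(m, n)) : (A - B)^t* = A^t* - B^t*.
Proof. by rewrite linearB map_mxB. Qed.

Lemma adjmxZ m n (c : C) (A : 'M[C]_(m, n)) : (c *: A)^t* = c^* *: A^t*.
Proof. by rewrite linearZ map_mxZ. Qed.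

Lemma adjmx_delta n (i : 'I_n) : (delta_mx i 0 : 'cV[C]_n)^t* = delta_mx 0 i.
Proof. by rewrite trmx_delta map_delta_mx. Qed.

Lemma form_delta n (B : 'M[C]_n) i j :
  ((delta_mx i 0 : 'cV[C]_n)^t* *m B *m (delta_mx j 0 : 'cV[C]_n)) 0 0 = B i j.
Proof. by rewrite adjmx_delta -rowE -colE !mxE. Qed.

Definition qform n (A : 'M[C]_n) (v : 'cV[C]_n) : C := (v^t* *m A *m v) 0 0.

Lemma qform_adj n (A : 'M[C]_n) v : (qform A v)^* = qform (A^t*) v.
Proof.
rewrite /qform; have -> : v^t* *m A^t* *m v = (v^t* *m A *m v)^t*.
  by rewrite !adjmxM trmxCK mulmxA.
by rewrite !mxE.
Qed.

Lemma qformD n (A B : 'M[C]_n) v : qform (A + B) v = qform A v + qform B v.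
Proof. by rewrite /qform mulmxDr mulmxDl !mxE. Qed.

Lemma qformB n (A B : 'M[C]_n) v : qform (A - B) v = qform A v - qform B v.
Proof. by rewrite /qform mulmxBr mulmxBl !mxE. Qed.

Lemma cnorm2E n (w : 'cV[C]_n) : (w^t* *m w) 0 0 = \sum_k `|w k 0| ^+ 2.
Proof. by rewrite mxE; apply: eq_bigr => k _; rewrite !mxE normCK mulrC. Qed.

Lemma cnorm2_ge0 n (w : 'cV[C]_n) : 0 <= (w^t* *m w) 0 0.
Proof. by rewrite cnorm2E sumr_ge0 // => k _; rewrite exprn_ge0. Qed.

Lemma cnorm2_eq0 n (w : 'cV[C]_n) : (w^t* *m w) 0 0 = 0 -> w = 0.
Proof.
rewrite cnorm2E => /psumr_eq0P w0; apply/matrixP => i j.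
rewrite ord1 mxE; apply/eqP; rewrite -normr_eq0 -sqrf_eq0.
by rewrite w0 // => k _; rewrite exprn_ge0.
Qed.

Lemma psd_adjmul m n (X : 'M[C]_(m, n)) : psdmx (X^t* *m X).
Proof. by move=> v; rewrite !mulmxA -adjmxM -mulmxA cnorm2_ge0. Qed.

Lemma qformDZ n (B : 'M[C]_n) u w c :
  qform B (u + c *: w) = qform B u + c * (u^t* *m B *m w) 0 0
                         + c^* * (w^t* *m B *m u) 0 0 + c^* * c * qform B w.
Proof.
have e00D (M N : 'M[C]_1) : (M + N) 0 0 = M 0 0 + N 0 0 by rewrite mxE.
have e00Z a (M : 'M[C]_1) : (a *: M) 0 0 = a * M 0 0 by rewrite mxE.
rewrite /qform adjmxD adjmxZ !mulmxDl !mulmxDr -!scalemxAl -!scalemxAr.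
by rewrite !e00D !e00Z addrA mulrA.
Qed.

Lemma qform_eq0_mx n (B : 'M[C]_n) : (forall v, qform B v = 0) -> B = 0.
Proof.
move=> B0; apply/matrixP => i j; rewrite mxE.
have cross c : c * B i j + c^* * B j i = 0.
  have := B0 (delta_mx i 0 + c *: delta_mx j 0).
  by rewrite qformDZ !B0 !form_delta mulr0 addr0 add0r.
have Bsym : B j i = B i j.
  move: (cross 'i); rewrite conjCi mulNr -mulrBr => /eqP.
  by rewrite mulf_eq0 (negPf (neq0Ci _)) subr_eq0 => /eqP.
move: (cross 1); rewrite conjC1 !mul1r Bsym => /eqP.
by rewrite -mulr2n mulrn_eq0 => /eqP.
Qed.

Lemma psd_hermitian n (A : 'M[C]_n) : psdmx A -> A^t* = A.
Proof.
move=> A_psd; apply/eqP; rewrite -subr_eq0; apply/eqP/qform_eq0_mx => v.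
by rewrite qformB -qform_adj geC0_conj ?subrr //; apply: A_psd.
Qed.

Lemma hermitian_spectral n (A : 'M[C]_n) : A^t* = A ->
  A = (spectralmx A)^t* *m diag_mx (spectral_diag A) *m spectralmx A.
Proof.
move=> A_herm; have /orthomx_spectralP {1}-> : A \is normalmx.
  by apply/normalmxP; rewrite A_herm.
by rewrite invmx_unitary // spectral_unitarymx.
Qed.

Section UnitaryConjugation.
Variables (n : nat) (U : 'M[C]_n).
Hypothesis U_unitary : U \is unitarymx.
Local Notation conj_diag D := (U^t* *m diag_mx D *m U).
Local Notation col_adj i := (U^t* *m (delta_mx i 0 : 'cV[C]_n)).

Lemma conj_diag_mul (D E : 'rV[C]_n) :
  conj_diag D *m conj_diag E = conj_diag (\row_j (D 0 j * E 0 j)).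
Proof.
rewrite -!mulmxA [U *m (U^t* *m _)]mulmxA (unitarymxP U_unitary) mul1mx.
by rewrite [diag_mx D *m _]mulmxA mulmx_diag !mulmxA.
Qed.

Lemma adjmx_conj_diag (D : 'rV[C]_n) :
  (conj_diag D)^t* = conj_diag (\row_j (D 0 j)^*).
Proof.
rewrite !adjmxM trmxCK mulmxA tr_diag_mx map_diag_mx.
apply: (congr1 (fun d => U^t* *m diag_mx d *m U)).
by apply/rowP => j; rewrite !mxE.
Qed.

Lemma qform_conj_diag (D : 'rV[C]_n) v :
  qform (conj_diag D) v = \sum_k D 0 k * `|(U *m v) k 0| ^+ 2.
Proof.
rewrite /qform !mulmxA -adjmxM -mulmxA mxE; apply: eq_bigr => k _.
by rewrite mul_mx_diag !mxE normCKC mulrAC mulrC.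
Qed.

Lemma psd_conj_diag (D : 'rV[C]_n) :
  (forall k, 0 <= D 0 k) -> psdmx (conj_diag D).
Proof.
move=> D_ge0 v; rewrite -/(qform _ v) qform_conj_diag.
by rewrite sumr_ge0 // => k _; rewrite mulr_ge0 ?exprn_ge0.
Qed.

Lemma conj_diag_eigenvector (D : 'rV[C]_n) i :
  conj_diag D *m col_adj i = D 0 i *: col_adj i.
Proof.
rewrite -!mulmxA [U *m _]mulmxA (unitarymxP U_unitary) mul1mx mul_diag_mx scalemxAr.
congr (_ *m _); apply/matrixP => a b; rewrite !mxE.
by have [->|] := eqVneq a i; rewrite ?mulr1n ?mulr0n ?mulr0 ?mul0r ?mulr1.
Qed.

Lemma cnorm2_col_adj i : ((col_adj i)^t* *m col_adj i) 0 0 = 1.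
Proof.
by rewrite adjmxM trmxCK adjmx_delta mulmxA mulmxtVK // -rowE !mxE !eqxx.
Qed.

Lemma conj_diag_eigenvalue (D : 'rV[C]_n) i :
  D 0 i = qform (conj_diag D) (col_adj i).
Proof.
rewrite /qform -mulmxA conj_diag_eigenvector -scalemxAr mxE.
by rewrite cnorm2_col_adj mulr1.
Qed.

Lemma mxtrace_conj_diag (D : 'rV[C]_n) : \tr (conj_diag D) = \sum_j D 0 j.
Proof.
by rewrite mxtrace_mulC mulmxA (unitarymxP U_unitary) mul1mx mxtrace_diag.
Qed.

Lemma mxrank_conj_diag (D : 'rV[C]_n) : \rank (conj_diag D) = \rank (diag_mx D).
Proof.
have U_unit : U \in unitmx by exact: unitarymx_unit.
have Ut_unit : U^t* \in unitmx by apply: unitarymx_unit; rewrite trmxC_unitary.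
by rewrite mxrankMfree ?row_free_unit // eqmxMfull ?row_full_unit.
Qed.

Lemma sum_qform_col_adj (A : 'M[C]_n) : \sum_j qform A (col_adj j) = \tr A.
Proof.
have UtU : U^t* *m U = 1%:M by rewrite -[U^t*]mul1mx mulmxKtV.
rewrite -[in RHS](mul1mx A) -UtU -mulmxA mxtrace_mulC; apply: eq_bigr => j _.
by rewrite -form_delta /qform adjmxM trmxCK !mulmxA.
Qed.

End UnitaryConjugation.

Lemma psd_spectral_ge0 n (A : 'M[C]_n) (A_psd : psdmx A) k :
  0 <= spectral_diag A 0 k.
Proof.
rewrite (conj_diag_eigenvalue (spectral_unitarymx A)).
by rewrite -(hermitian_spectral (psd_hermitian A_psd)); apply: A_psd.
Qed.

Lemma psd_sqrt n (A : 'M[C]_n) : psdmx A -> exists S, psdmx S /\ S *m S = A.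
Proof.
move=> A_psd; set U := spectralmx A; set D := spectral_diag A.
have U_unitary : U \is unitarymx := spectral_unitarymx A.
pose sqrtD := \row_j sqrtC (D 0 j).
have sqrtD_ge0 k : 0 <= sqrtD 0 k by rewrite mxE sqrtC_ge0 psd_spectral_ge0.
have sqrtDK : \row_j (sqrtD 0 j * sqrtD 0 j) = D.
  by apply/rowP => j; rewrite !mxE -expr2 sqrtCK.
exists (U^t* *m diag_mx sqrtD *m U); split; first exact: psd_conj_diag.
by rewrite (conj_diag_mul U_unitary) sqrtDK -hermitian_spectral ?psd_hermitian.
Qed.

Lemma psd_qform_eq0 n (A : 'M[C]_n) v : psdmx A -> qform A v = 0 -> A *m v = 0.
Proof.
move=> /psd_sqrt[S [S_psd <-]].
rewrite /qform -{1}(psd_hermitian S_psd) !mulmxA -adjmxM -mulmxA => /cnorm2_eq0.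
by rewrite -mulmxA => ->; rewrite mulmx0.
Qed.

(* On an eigenvector v of H = P - Q with eigenvalue mu,
   0 = v^* (P P - Q Q) v = v^* (P H + H Q) v = mu (v^* P v + v^* Q v),
   so mu <> 0 would force P v = Q v = 0, i.e. mu v = H v = 0. *)
Lemma psd_sqrt_unique n (P Q : 'M[C]_n) :
  psdmx P -> psdmx Q -> P *m P = Q *m Q -> P = Q.
Proof.
move=> P_psd Q_psd PQ; apply/eqP; rewrite -subr_eq0; apply/eqP.
set H := P - Q; have H_herm : H^t* = H by rewrite adjmxB !psd_hermitian.
have U_unitary := spectral_unitarymx H; set U := spectralmx H in U_unitary.
suff D0 : spectral_diag H = 0.
  by rewrite [H](hermitian_spectral H_herm) D0 raddf0 mulmx0 mul0mx.
apply/rowP => i; rewrite mxE; set mu := spectral_diag H 0 i.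
pose v := U^t* *m (delta_mx i 0 : 'cV[C]_n).
have Hv : H *m v = mu *: v.
  by rewrite {1}[H](hermitian_spectral H_herm) conj_diag_eigenvector.
have mu_real : mu^* = mu.
  rewrite /mu (conj_diag_eigenvalue U_unitary) qform_adj.
  by rewrite -(hermitian_spectral H_herm) H_herm.
have vH : v^t* *m H = mu *: v^t* by rewrite -H_herm -adjmxM Hv adjmxZ mu_real.
have qform_mu A : qform (A *m H) v = mu * qform A v.
  by rewrite /qform -!mulmxA Hv -!scalemxAr mxE.
have qform_mu' A : qform (H *m A) v = mu * qform A v.
  by rewrite /qform [v^t* *m (H *m A)]mulmxA vH -!scalemxAl mxE.
have : mu * (qform P v + qform Q v) = 0.
  have <- : qform (P *m P - Q *m Q) v = 0.
    by rewrite PQ subrr /qform mulmx0 mul0mx mxE.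
  have -> : P *m P - Q *m Q = P *m H + H *m Q.
    by rewrite mulmxBr mulmxBl addrA subrK.
  by rewrite qformD qform_mu qform_mu' mulrDr.
move/eqP; rewrite mulf_eq0 => /orP[/eqP //|].
rewrite paddr_eq0; [|exact: P_psd|exact: Q_psd] => /andP[/eqP Pv /eqP Qv].
have : H *m v = 0.
  by rewrite mulmxBl (psd_qform_eq0 P_psd Pv) (psd_qform_eq0 Q_psd Qv) subrr.
rewrite Hv => /(congr1 (fun M => (v^t* *m M) 0 0)).
by rewrite -scalemxAr mxE cnorm2_col_adj // mulr1 mulmx0 mxE.
Qed.

Lemma mxabs_spec m n (X : 'M[C]_(m, n)) :
  psdmx (mxabs X) /\ mxabs X *m mxabs X = X^t* *m X.
Proof. exact: epsilon_spec (psd_sqrt (psd_adjmul X)). Qed.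

Lemma mxabs_psd m n (X : 'M[C]_(m, n)) : psdmx (mxabs X).
Proof. by case: (mxabs_spec X). Qed.

Lemma mxabs_sqr m n (X : 'M[C]_(m, n)) : mxabs X *m mxabs X = X^t* *m X.
Proof. by case: (mxabs_spec X). Qed.

Lemma mxabs_unique m n (X : 'M[C]_(m, n)) P :
  psdmx P -> P *m P = X^t* *m X -> mxabs X = P.
Proof.
by move=> P_psd PP; apply: psd_sqrt_unique (mxabs_psd X) P_psd _; rewrite mxabs_sqr.
Qed.

Lemma mxabs_conj_diag n (U : 'M[C]_n) (D : 'rV[C]_n) : U \is unitarymx ->
  mxabs (U^t* *m diag_mx D *m U) = U^t* *m diag_mx (\row_j `|D 0 j|) *m U.
Proof.
move=> U_unitary; apply: mxabs_unique.
  by apply: psd_conj_diag => // k; rewrite mxE normr_ge0.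
rewrite adjmx_conj_diag !(conj_diag_mul U_unitary).
apply: (congr1 (fun d => U^t* *m diag_mx d *m U)).
by apply/rowP => j; rewrite !mxE -expr2 normCKC.
Qed.

Lemma mxabs0 m n : mxabs (0 : 'M[C]_(m, n)) = 0.
Proof.
apply: mxabs_unique; last by rewrite !mulmx0.
by move=> v; rewrite mulmx0 mul0mx mxE.
Qed.

Lemma mxabsZ m n (a : R) (X : 'M[C]_(m, n)) : 0 <= a ->
  mxabs (a%:C%C *: X) = a%:C%C *: mxabs X.
Proof.
move=> a_ge0; have a_ge0' : 0 <= a%:C%C :> C by rewrite ler0c.
apply: mxabs_unique.
  by move=> v; rewrite -scalemxAr -scalemxAl mxE mulr_ge0 // mxabs_psd.
rewrite -scalemxAl -scalemxAr mxabs_sqr adjmxZ -scalemxAl -scalemxAr !scalerA.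
by rewrite geC0_conj.
Qed.

Lemma trnorm0 n : trnorm (0 : 'M[C]_n) = 0.
Proof. by rewrite /trnorm mxabs0 mxtrace0. Qed.

Lemma trnormZ n (a : R) (X : 'M[C]_n) :
  0 <= a -> trnorm (a%:C%C *: X) = a * trnorm X.
Proof.
move=> a_ge0; rewrite /trnorm mxabsZ // mxtraceZ.
by case: (\tr _) => x y /=; rewrite mul0r subr0.
Qed.

Lemma trnormB_statemx_le2 n (A B : 'M[C]_n) :
  statemx A -> statemx B -> trnorm (A - B) <= 2.
Proof.
move=> [A_psd trA] [B_psd trB].
have H_herm : (A - B)^t* = A - B by rewrite adjmxB !psd_hermitian.
have U_unitary := spectral_unitarymx (A - B).
rewrite /trnorm [A - B](hermitian_spectral H_herm) (mxabs_conj_diag _ U_unitary).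
rewrite (mxtrace_conj_diag U_unitary); set D := spectral_diag _.
suff : \sum_j (\row_j `|D 0 j|) 0 j <= 2%:C%C by rewrite lecE => /andP[_].
have -> : 2%:C%C = \tr A + \tr B :> C by rewrite trA trB rmorph_nat.
rewrite -(sum_qform_col_adj U_unitary A).
rewrite -(sum_qform_col_adj U_unitary B) -big_split ler_sum // => j _.
rewrite mxE (conj_diag_eigenvalue U_unitary) -(hermitian_spectral H_herm) qformB.
by rewrite (le_trans (ler_normB _ _)) // !ger0_norm ?A_psd ?B_psd.
Qed.

Lemma psd_support_proj n (M : 'M[C]_n) : psdmx M ->
  exists Q : 'M[C]_n,
    [/\ Q^t* = Q, Q *m Q = Q, \tr Q = (\rank M)%:R & M *m Q = M].
Proof.
move=> M_psd; have M_spectral := hermitian_spectral (psd_hermitian M_psd).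
have U_unitary := spectral_unitarymx M.
set U := spectralmx M in M_spectral U_unitary.
set D := spectral_diag M in M_spectral.
pose q := \row_j (D 0 j != 0)%:R : 'rV[C]_n.
have q_conj : \row_j (q 0 j)^* = q by apply/rowP => j; rewrite !mxE conjC_nat.
have q_idem : \row_j (q 0 j * q 0 j) = q.
  by apply/rowP => j; rewrite !mxE; case: (D 0 j != 0); rewrite ?mulr1 ?mulr0.
have Dq : \row_j (D 0 j * q 0 j) = D.
  by apply/rowP => j; rewrite !mxE; case: eqP => [->|]; rewrite ?mul0r ?mulr1.
exists (U^t* *m diag_mx q *m U); split.
- by rewrite adjmx_conj_diag q_conj.
- by rewrite (conj_diag_mul U_unitary) q_idem.
- rewrite (mxtrace_conj_diag U_unitary) M_spectral (mxrank_conj_diag U_unitary).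
  rewrite mxrank_diag natr_sum.
  by apply: eq_bigr => j; rewrite mxE.
- by rewrite M_spectral (conj_diag_mul U_unitary) Dq.
Qed.

End PsdMatrices.

Lemma sum_mxtens_index (V : nmodType) m n (F : 'I_(m * n) -> V) :
  \sum_x F x = \sum_i \sum_j F (mxtens_index (i, j)).
Proof.
rewrite pair_big (reindex (@mxtens_index m n)) /=; first by apply: eq_bigr => -[].
by exists (@mxtens_unindex m n) => x _; rewrite (mxtens_indexK, mxtens_unindexK).
Qed.

Lemma mxtens_matrixP (T : Type) m n p q (X Y : 'M[T]_(m * n, p * q)) :
  (forall a i b j, X (mxtens_index (a, i)) (mxtens_index (b, j)) =
                   Y (mxtens_index (a, i)) (mxtens_index (b, j))) -> X = Y.
Proof.
move=> XY; apply/matrixP => x y.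
by case: (mxtens_indexP x) => a i; case: (mxtens_indexP y) => b j; apply: XY.
Qed.

Section ChoiOperators.
Variable R : realType.
Local Notation C := R[i].

Lemma mul_tens1mx m n p q (A : 'M[C]_(n, p)) (X : 'M[C]_(m * p, q)) b k y :
  ((1%:M *t A) *m X) (mxtens_index (b, k)) y =
  \sum_i A k i * X (mxtens_index (b, i)) y.
Proof.
rewrite mxE sum_mxtens_index (bigD1 b) //= [X in _ + X]big1 ?addr0 => [|a /negPf ab].
  by apply: eq_bigr => i _; rewrite tensmxE mxE eqxx mul1r.
by apply: big1 => i _; rewrite tensmxE mxE eq_sym ab !mul0r.
Qed.

Lemma mul_mxtens1 m n p q (B : 'M[C]_(p, n)) (X : 'M[C]_(q, m * p)) x b l :
  (X *m (1%:M *t B)) x (mxtens_index (b, l)) =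
  \sum_j X x (mxtens_index (b, j)) * B j l.
Proof.
rewrite mxE sum_mxtens_index (bigD1 b) //= [X in _ + X]big1 ?addr0 => [|a /negPf ab].
  by apply: eq_bigr => j _; rewrite tensmxE mxE eqxx mul1r.
by apply: big1 => j _; rewrite tensmxE mxE ab !mul0r mulr0.
Qed.

Lemma adjmx_tens1mx m n p (A : 'M[C]_(n, p)) :
  (1%:M *t A : 'M_(m * n, m * p))^t* = 1%:M *t A^t*.
Proof. by rewrite trmx_tens map_mxT trmx1 map_mx1. Qed.

Lemma sum_tens_deltaE n p q (F : 'I_n -> 'I_n -> 'M[C]_(p, q)) b k b' l :
  (\sum_k' \sum_l' (F k' l' *t delta_mx k' l'))
    (mxtens_index (b, k)) (mxtens_index (b', l)) = F k l b b'.
Proof.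
rewrite summxE (bigD1 k) //= [X in _ + X]big1 ?addr0 => [|k' /negPf k'k].
  rewrite summxE (bigD1 l) //= [X in _ + X]big1 ?addr0 => [|l' /negPf l'l].
    by rewrite tensmxE mxE !eqxx mulr1.
  by rewrite tensmxE mxE eqxx eq_sym l'l mulr0.
by rewrite summxE big1 // => l' _; rewrite tensmxE mxE eq_sym k'k mulr0.
Qed.

Lemma ext_idE dA dB (S : 'M[C]_dA -> 'M[C]_dB) n (X : 'M[C]_(dA * n)) b k b' l :
  ext_id S X (mxtens_index (b, k)) (mxtens_index (b', l)) = S (blockA X k l) b b'.
Proof. exact: sum_tens_deltaE. Qed.

Lemma ext_idB dA dB (S1 S2 : 'M[C]_dA -> 'M[C]_dB) n (X : 'M[C]_(dA * n)) :
  ext_id (fun Y => S1 Y - S2 Y) X = ext_id S1 X - ext_id S2 X.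
Proof. by apply: mxtens_matrixP => b k b' l; rewrite !mxE !ext_idE !mxE. Qed.

Lemma ext_idZ dA dB (S : {linear 'M[C]_dA -> 'M[C]_dB}) n a (X : 'M[C]_(dA * n)) :
  ext_id S (a *: X) = a *: ext_id S X.
Proof.
apply: mxtens_matrixP => b k b' l; rewrite mxE !ext_idE.
have -> : blockA (a *: X) k l = a *: blockA X k l.
  by apply/matrixP => i j; rewrite !mxE.
by rewrite linearZ mxE.
Qed.

Lemma blockA_tens1_mul dA n (A B : 'M[C]_n) (X : 'M[C]_(dA * n)) k l :
  blockA ((1%:M *t A) *m X *m (1%:M *t B)) k l =
  \sum_k' \sum_l' (A k k' * B l' l) *: blockA X k' l'.
Proof.
apply/matrixP => i j; rewrite mxE mul_mxtens1 summxE.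
under [RHS]eq_bigr do rewrite summxE.
rewrite [RHS]exchange_big /=; apply: eq_bigr => l' _.
by rewrite mul_tens1mx mulr_suml; apply: eq_bigr => k' _; rewrite !mxE mulrAC.
Qed.

Lemma ext_id_tens1_mul dA dB (S : {linear 'M[C]_dA -> 'M[C]_dB}) n
    (A B : 'M[C]_n) (X : 'M[C]_(dA * n)) :
  ext_id S ((1%:M *t A) *m X *m (1%:M *t B)) =
  (1%:M *t A) *m ext_id S X *m (1%:M *t B).
Proof.
apply: mxtens_matrixP => b k b' l.
rewrite ext_idE blockA_tens1_mul mul_mxtens1 linear_sum summxE.
under eq_bigr do rewrite linear_sum summxE.
rewrite exchange_big /=; apply: eq_bigr => l' _.
rewrite mul_tens1mx mulr_suml; apply: eq_bigr => k' _.
by rewrite linearZ mxE ext_idE mulrAC.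
Qed.

Lemma mxtrace_ext_id dA dB (S : 'M[C]_dA -> 'M[C]_dB) n (X : 'M[C]_(dA * n)) :
  TPmap S -> \tr (ext_id S X) = \tr X.
Proof.
move=> S_tp; rewrite /mxtrace !sum_mxtens_index exchange_big /=.
rewrite [RHS]exchange_big /=; apply: eq_bigr => k _.
under eq_bigr do rewrite ext_idE.
have := S_tp (blockA X k k); rewrite /mxtrace => ->.
by apply: eq_bigr => i _; rewrite mxE.
Qed.

(* The vectorisation |Q>> = sum_(i, k) Q_(k, i) |i> (x) |k>, so that
   |1>> is the unnormalised maximally entangled vector of the Choi operator. *)
Definition vecmx d (Q : 'M[C]_d) : 'cV[C]_(d * d) :=
  \col_x Q (mxtens_unindex x).2 (mxtens_unindex x).1.

Definition vec_state d (Q : 'M[C]_d) : 'M[C]_(d * d) := vecmx Q *m (vecmx Q)^t*.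

Lemma vecmxE d (Q : 'M[C]_d) i k : vecmx Q (mxtens_index (i, k)) 0 = Q k i.
Proof. by rewrite mxE mxtens_indexK. Qed.

Lemma vecmx_tens1 d (Q : 'M[C]_d) : vecmx Q = (1%:M *t Q) *m vecmx 1%:M.
Proof.
apply/matrixP => x y; rewrite ord1; case: (mxtens_indexP x) => i k.
rewrite vecmxE mul_tens1mx (bigD1 i) //= vecmxE mxE eqxx mulr1 big1 ?addr0 //.
by move=> j /negPf ji; rewrite vecmxE mxE ji mulr0.
Qed.

Lemma blockA_vec_state1 d (k l : 'I_d) :
  blockA (vec_state 1%:M) k l = delta_mx k l.
Proof.
apply/matrixP => i j; rewrite !mxE big_ord1 !mxE !mxtens_indexK /=.
by rewrite conjC_nat -natrM mulnb !(eq_sym _ i) !(eq_sym _ j).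
Qed.

Lemma choi_ext_id d dB (S : 'M[C]_d -> 'M[C]_dB) :
  choi S = ext_id S (vec_state 1%:M).
Proof.
by apply: eq_bigr => k _; apply: eq_bigr => l _; rewrite blockA_vec_state1.
Qed.

Lemma psd_vec_state d (Q : 'M[C]_d) : psdmx (vec_state Q).
Proof. by rewrite /vec_state -{1}[vecmx Q]trmxCK; apply: psd_adjmul. Qed.

Lemma choi_psd d dB (S : 'M[C]_d -> 'M[C]_dB) : CPmap S -> psdmx (choi S).
Proof. by move=> S_cp; rewrite choi_ext_id; apply/S_cp/psd_vec_state. Qed.

Lemma ext_id_statemx dA dB (S : 'M[C]_dA -> 'M[C]_dB) n (rho : 'M[C]_(dA * n)) :
  CPmap S -> TPmap S -> statemx rho -> statemx (ext_id S rho).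
Proof.
move=> S_cp S_tp [rho_psd rho_tr].
by split; rewrite ?mxtrace_ext_id //; apply: S_cp.
Qed.

Lemma mxtrace_vec_state d (Q : 'M[C]_d) :
  \tr (vec_state Q) = \tr (Q *m Q^t*).
Proof.
rewrite mxtrace_mulC /mxtrace big_ord1 mxE sum_mxtens_index exchange_big /=.
apply: eq_bigr => k _; rewrite mxE; apply: eq_bigr => i _.
by rewrite !mxE mxtens_indexK mulrC.
Qed.

Definition tens_embed {dB d : nat} (b : 'I_dB) : 'M[C]_(dB * d, d) :=
  \matrix_(x, j) (x == mxtens_index (b, j))%:R.

Lemma mul_tens_embed m dB d (X : 'M[C]_(m, dB * d)) b x j :
  (X *m tens_embed b) x j = X x (mxtens_index (b, j)).
Proof.
rewrite mxE (bigD1 (mxtens_index (b, j))) //= mxE eqxx mulr1 big1 ?addr0 //.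
by move=> y /negPf yb; rewrite mxE yb mulr0.
Qed.

Lemma adjmx_tens_embed_mul m dB d (X : 'M[C]_(dB * d, m)) b i y :
  ((tens_embed b)^t* *m X) i y = X (mxtens_index (b, i)) y.
Proof.
rewrite mxE (bigD1 (mxtens_index (b, i))) //= !mxE eqxx conjC1 mul1r big1 ?addr0 //.
by move=> x /negPf xb; rewrite !mxE xb conjC0 mul0r.
Qed.

Lemma ptraceB_tens_embed dB d (P : 'M[C]_(dB * d)) :
  ptraceB P = \sum_b (tens_embed b)^t* *m P *m tens_embed b.
Proof.
apply/matrixP => i j; rewrite mxE summxE; apply: eq_bigr => b _.
by rewrite mul_tens_embed adjmx_tens_embed_mul.
Qed.

Lemma qform_ptraceB dB d (P : 'M[C]_(dB * d)) u :
  qform (ptraceB P) u = \sum_b qform P (tens_embed b *m u).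
Proof.
rewrite ptraceB_tens_embed /qform mulmx_sumr mulmx_suml summxE.
by apply: eq_bigr => b _; rewrite adjmxM !mulmxA.
Qed.

Lemma psd_ptraceB dB d (P : 'M[C]_(dB * d)) : psdmx P -> psdmx (ptraceB P).
Proof.
move=> P_psd u; rewrite -/(qform _ u) qform_ptraceB.
by rewrite sumr_ge0 // => b _; apply: P_psd.
Qed.

Lemma mxabs_mul_eq0 m n (J : 'M[C]_(m, n)) (w : 'cV[C]_n) :
  mxabs J *m w = 0 -> J *m w = 0.
Proof.
move=> Pw; apply: cnorm2_eq0.
rewrite adjmxM -mulmxA [J^t* *m _]mulmxA -mxabs_sqr -mulmxA Pw.
by rewrite !mulmx0 mxE.
Qed.

Lemma ptraceB_mxabs_support dB d (J : 'M[C]_(dB * d)) (Q : 'M[C]_d) :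
  ptraceB (mxabs J) *m Q = ptraceB (mxabs J) -> J *m (1%:M *t Q) = J.
Proof.
move=> MQ; have P_psd := mxabs_psd J.
have JEK b (v : 'cV[C]_d) : J *m (tens_embed b *m ((1%:M - Q) *m v)) = 0.
  apply: mxabs_mul_eq0; apply: (psd_qform_eq0 P_psd).
  have : qform (ptraceB (mxabs J)) ((1%:M - Q) *m v) = 0.
    rewrite /qform mulmxA -[_ *m ptraceB _ *m _]mulmxA mulmxBr mulmx1 MQ subrr.
    by rewrite mulmx0 mul0mx mxE.
  by rewrite qform_ptraceB => /psumr_eq0P -> // b' _; apply: P_psd.
apply/matrixP => x y; case: (mxtens_indexP y) => b l.
have := congr1 (fun A : 'cV[C]_(dB * d) => A x 0) (JEK b (delta_mx l 0)).
have entryB (A B : 'M[C]_(dB * d, d)) : (A - B) x l = A x l - B x l.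
  by rewrite !mxE.
rewrite !mulmxA -colE mxE mulmxBr mulmx1 entryB [RHS]mxE.
move/eqP; rewrite subr_eq0 mul_tens_embed mul_mxtens1 => /eqP ->.
by rewrite mxE; apply: eq_bigr => j _; rewrite mul_tens_embed.
Qed.

Lemma ptraceB_mxabs_eq0 dB d (J : 'M[C]_(dB * d)) :
  ptraceB (mxabs J) = 0 -> J = 0.
Proof.
move=> M0; have := @ptraceB_mxabs_support _ _ J 0.
by rewrite M0 mulmx0 tensmx0 mulmx0 => /(_ erefl).
Qed.

Lemma tens1mx_sandwich m n (J : 'M[C]_(m * n)) (Q : 'M[C]_n) :
  J^t* = J -> Q^t* = Q -> J *m (1%:M *t Q) = J ->
  (1%:M *t Q) *m J *m (1%:M *t Q)^t* = J.
Proof.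
move=> J_herm Q_herm JQ; rewrite adjmx_tens1mx Q_herm.
suff -> : (1%:M *t Q) *m J = J by [].
by rewrite -{1}Q_herm -adjmx_tens1mx -{1}J_herm -adjmxM JQ.
Qed.

Lemma ext_id_vec_state d dB (S : {linear 'M[C]_d -> 'M[C]_dB}) (Q : 'M[C]_d) :
  ext_id S (vec_state Q) = (1%:M *t Q) *m choi S *m (1%:M *t Q)^t*.
Proof.
rewrite choi_ext_id adjmx_tens1mx -ext_id_tens1_mul -adjmx_tens1mx.
by rewrite /vec_state vecmx_tens1 adjmxM !mulmxA.
Qed.

Lemma choiB d dB (S1 S2 : 'M[C]_d -> 'M[C]_dB) :
  choi (fun Y => S1 Y - S2 Y) = choi S1 - choi S2.
Proof. by rewrite !choi_ext_id ext_idB. Qed.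

Lemma choiB_hermitian d dB (S1 S2 : 'M[C]_d -> 'M[C]_dB) :
  CPmap S1 -> CPmap S2 ->
  (choi (fun Y => S1 Y - S2 Y))^t* = choi (fun Y => S1 Y - S2 Y).
Proof.
move=> cp1 cp2; rewrite choiB adjmxB.
by rewrite (psd_hermitian (choi_psd cp1)) (psd_hermitian (choi_psd cp2)).
Qed.

Lemma ext_idZ_sub d dB (S1 S2 : {linear 'M[C]_d -> 'M[C]_dB}) n a
    (X : 'M[C]_(d * n)) :
  ext_id (fun Y => S1 Y - S2 Y) (a *: X) = a *: ext_id (fun Y => S1 Y - S2 Y) X.
Proof. by rewrite !ext_idB !ext_idZ scalerBr. Qed.

Lemma ext_id_sub_vec_state d dB (S1 S2 : {linear 'M[C]_d -> 'M[C]_dB})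
    (Q : 'M[C]_d) :
  ext_id (fun Y => S1 Y - S2 Y) (vec_state Q) =
  (1%:M *t Q) *m choi (fun Y => S1 Y - S2 Y) *m (1%:M *t Q)^t*.
Proof. by rewrite ext_idB !ext_id_vec_state choiB mulmxBr mulmxBl. Qed.

Lemma statemx_vec_state d (Q : 'M[C]_d) r :
  Q^t* = Q -> Q *m Q = Q -> \tr Q = r%:R -> (0 < r)%N ->
  statemx ((r%:R^-1)%:C%C *: vec_state Q).
Proof.
move=> Q_herm Q_idem trQ r_gt0; split.
  move=> v; rewrite -scalemxAr -scalemxAl mxE mulr_ge0 ?psd_vec_state //.
  by rewrite ler0c invr_ge0.
rewrite mxtraceZ mxtrace_vec_state Q_herm Q_idem trQ.
by rewrite -(rmorph_nat (real_complex R)) -rmorphM /= mulVf ?pnatr_eq0 -?lt0n.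
Qed.

End ChoiOperators.

Section Norms.
Variable R : realType.
Local Notation C := R[i].

Lemma trnorm_ext_id_le_diamond dA dB (Phi1 Phi2 : {linear 'M[C]_dA -> 'M[C]_dB})
    n (rho : 'M[C]_(dA * n)) :
  channel Phi1 -> channel Phi2 -> statemx rho ->
  trnorm (ext_id (fun X => Phi1 X - Phi2 X) rho) <=
  diamond_norm (fun X => Phi1 X - Phi2 X).
Proof.
move=> [cp1 tp1] [cp2 tp2] rho_state; set Delta := fun X => _.
have state_le2 n' (rho' : 'M[C]_(dA * n')) :
    statemx rho' -> trnorm (ext_id Delta rho') <= 2.
  move=> rho'_state; rewrite ext_idB.
  by apply: trnormB_statemx_le2; apply: ext_id_statemx.
apply: sup_upper_bound; last by exists n, rho.
split; first by exists (trnorm (ext_id Delta rho)), n, rho.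
by exists 2 => _ [n' [rho' [/state_le2 le2 ->]]].
Qed.

Lemma me_normE d dB (S : 'M[C]_d -> 'M[C]_dB) :
  me_norm S = d%:R^-1 * trnorm (choi S).
Proof.
rewrite /me_norm.
have -> : d%:R^-1 = (d%:R^-1)%:C%C :> C by rewrite fmorphV /= rmorph_nat.
by rewrite trnormZ // invr_ge0.
Qed.

End Norms.

Theorem corollary1 (R : realType) (d dB : nat)
  (Phi1 Phi2 : {linear 'M[R[i]]_d -> 'M[R[i]]_dB}) :
  channel Phi1 -> channel Phi2 ->
  let Delta := fun X : 'M[R[i]]_d => Phi1 X - Phi2 X in
  let r := \rank (Mop Delta) in
  me_norm Delta <= (r%:R / d%:R) * diamond_norm Delta.
Proof.
move=> ch1 ch2; cbv zeta; set Delta := fun X => _; set r := \rank _.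
rewrite me_normE; set J := choi Delta.
have [r0|r_gt0] := posnP r.
  have J0 : J = 0 by apply/ptraceB_mxabs_eq0/eqP; rewrite -mxrank_eq0 -/r r0.
  by rewrite J0 trnorm0 r0 !mul0r mulr0.
have J_herm : J^t* = J.
  by case: ch1 ch2 => [cp1 _] [cp2 _]; apply: choiB_hermitian.
have [Q [Q_herm Q_idem trQ MQ]] := psd_support_proj (psd_ptraceB (mxabs_psd J)).
have JQ : J *m (1%:M *t Q) = J := ptraceB_mxabs_support MQ.
have rho_state := statemx_vec_state Q_herm Q_idem trQ r_gt0.
have := trnorm_ext_id_le_diamond ch1 ch2 rho_state.
rewrite (ext_idZ_sub Phi1 Phi2) (ext_id_sub_vec_state Phi1 Phi2) -/Delta -/J.
rewrite tens1mx_sandwich // trnormZ ?invr_ge0 //.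
move=> /(ler_wpM2l (divr_ge0 (ler0n _ r) (ler0n _ d))).
by rewrite mulrACA divff ?mul1r // pnatr_eq0 -lt0n.
Qed.
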